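(* Let $q>2$ be a prime power, $G=\mathrm{GL}_2(\mathbb F_q)$, and $P=\left\{\begin{pmatrix}1&y\\0&w\end{pmatrix}\;\middle|\; y\in\mathbb F_q,\ w\in\mathbb F_q^\times\right\}\le G$. Then \[\mathrm{Ind}_P^{G}(\mathbb 1_P)\cong \mathbb 1_{G}\oplus\rho_{\mathbb 1_q}\oplus\bigoplus_{\chi\in\widehat{\mathbb F_q^\times}\setminus\{\mathbb 1_q\}}\rho_{\chi,\mathbb 1_q}.\]
   Context: All representations are complex. $\mathbb 1_H$ denotes the trivial representation of a group $H$, and $\mathbb 1_q$ the trivial character of $\mathbb F_q^\times$; $\widehat{\mathbb F_q^\times}$ is the set of one-dimensional characters of $\mathbb F_q^\times$. Let $B\le G$ be the subgroup of upper triangular invertible matrices. For $\mu_1,\mu_2\in\widehat{\mathbb F_q^\times}$, let $\mu_{1,2}:B\to\mathbb C^\times$, $\mu_{1,2}\begin{pmatrix}u&w\\0&v\end{pmatrix}=\mu_1(u)\mu_2(v)$, and $\rho_{\mu_1,\mu_2}=\mathrm{Ind}_B^G(\mu_{1,2})$ (irreducible of dimension $q+1$ when $\mu_1\ne\mu_2$). For $\mu\in\widehat{\mathbb F_q^\times}$, $\det_\mu(X)=\mu(\det X)$ is a one-dimensional constituent of $\rho_{\mu,\mu}$, and $\rho_\mu$ denotes its complement in $\rho_{\mu,\mu}$ (an irreducible representation of dimension $q$); in particular $\rho_{\mathbb 1_q}$ is the $q$-dimensional irreducible constituent of $\mathrm{Ind}_B^G(\mathbb 1_B)$ other than the trivial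 one. *)

From HB Require Import structures.
From mathcomp Require Import all_boot all_order all_algebra all_fingroup all_solvable all_field all_character.
Set Implicit Arguments. Unset Strict Implicit. Unset Printing Implicit Defensive.
Import GroupScope GRing.Theory Num.Theory.
Local Open Scope ring_scope.

Section GL2.
Variable F : finFieldType.
Local Notation gT := {'GL_2[F]}.

Definition Bset : {set gT} := [set g : gT | GLval g 1 0 == 0].
Definition Pset : {set gT} :=
  [set g : gT | (GLval g 1 0 == 0) && (GLval g 0 0 == 1)].

Lemma sum_I2 (f : 'I_2 -> F) : \sum_(k < 2) f k = f 0 + f 1.
Proof. by rewrite big_ord_recl big_ord1; congr (_ + f _); apply: val_inj. Qed.

Lemma mul_tri_10 (A C : 'M[F]_2) : A 1 0 = 0 -> C 1 0 = 0 -> (A *m C) 1 0 = 0.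
Proof. by move=> a c; rewrite mxE sum_I2 a c mulr0 mul0r addr0. Qed.

Lemma mul_tri_00 (A C : 'M[F]_2) : C 1 0 = 0 -> (A *m C) 0 0 = A 0 0 * C 0 0.
Proof. by move=> c; rewrite mxE sum_I2 c mulr0 addr0. Qed.

Lemma mul_tri_11 (A C : 'M[F]_2) : A 1 0 = 0 -> (A *m C) 1 1 = A 1 1 * C 1 1.
Proof. by move=> a; rewrite mxE sum_I2 a mul0r add0r. Qed.

Lemma Bset_group : group_set Bset.
Proof.
apply/andP; split; first by rewrite inE GL_1E mxE.
apply/subsetP=> _ /mulsgP[x y Bx By ->]; rewrite !inE in Bx By *.
by rewrite GL_MxE mul_tri_10 //; apply/eqP.
Qed.

Lemma Pset_group : group_set Pset.
Proof.
apply/andP; split; first by rewrite inE GL_1E !mxE /= !eqxx.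
apply/subsetP=> _ /mulsgP[x y Px Py ->]; rewrite !inE in Px Py *.
case/andP: Px => /eqP x1 /eqP x0; case/andP: Py => /eqP y1 /eqP y0.
by rewrite GL_MxE mul_tri_10 // mul_tri_00 // x0 y0 mulr1 !eqxx.
Qed.

Canonical Bgroup := group Bset_group.
Canonical Pgroup := group Pset_group.

Lemma Bdiag_nz (y : gT) : y \in Bset -> GLval y 0 0 != 0 /\ GLval y 1 1 != 0.
Proof.
rewrite inE => /eqP y10; have := GL_det y.
rewrite (expand_det_col _ 0) sum_I2 /cofactor y10 mul0r addr0.
have -> : \det (row' 0 (col' 0 (GLval y))) = GLval y 1 1.
  by rewrite [row' _ _]mx11_scalar det_scalar1 !mxE; congr (GLval y _ _); apply: val_inj.
by rewrite expr0 mul1r mulf_eq0 negb_or => /andP[].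
Qed.

Lemma Bconj_diag (x y : gT) : x \in Bset -> y \in Bset ->
  GLval (x ^ y)%g 0 0 = GLval x 0 0 /\ GLval (x ^ y)%g 1 1 = GLval x 1 1.
Proof.
move=> Bx By; have Bz : (x ^ y)%g \in Bset by rewrite groupJ.
have Ey : GLval y * GLval (x ^ y)%g = GLval x * GLval y.
  by rewrite -!GL_ME conjgE !mulgA mulgV mul1g.
have [y0 y1] := Bdiag_nz By.
move: Bz Ey; set z := (x ^ y)%g => Bz Ey.
move: Bx By Bz; rewrite !inE => /eqP x10 /eqP y10 /eqP z10.
have E00 : GLval y 0 0 * GLval z 0 0 = GLval x 0 0 * GLval y 0 0.
  by rewrite -mul_tri_00 // -[RHS]mul_tri_00 // !mulmxE Ey.
have E11 : GLval y 1 1 * GLval z 1 1 = GLval x 1 1 * GLval y 1 1.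
  by rewrite -mul_tri_11 // -[RHS]mul_tri_11 // !mulmxE Ey.
by split; [apply: (mulfI y0); rewrite E00 mulrC | apply: (mulfI y1); rewrite E11 mulrC].
Qed.

Definition Fx := [set: {unit F}]%G.
Definition toUnit (a : F) : {unit F} := insubd (1%g : {unit F}) a.

Definition mu12_fun (m1 m2 : 'CF(Fx)) (g : gT) : algC :=
  if g \in Bset then m1 (toUnit (GLval g 0 0)) * m2 (toUnit (GLval g 1 1)) else 0.

Fact mu12_subproof m1 m2 : is_class_fun <<Bset>> [ffun g => mu12_fun m1 m2 g].
Proof.
rewrite genGid; apply: intro_class_fun => [x y Bx By | x nBx].
  by rewrite /mu12_fun groupJ // Bx; have [-> ->] := Bconj_diag Bx By.
by rewrite /mu12_fun (negPf nBx).
Qed.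

Definition mu12 m1 m2 : 'CF(Bset) := Cfun 0 (mu12_subproof m1 m2).

Definition Gset : {set gT} := [set: gT].

Definition rho2 m1 m2 : 'CF(Gset) := 'Ind[Gset, Bset] (mu12 m1 m2).

(* rho_{1_q} = complement of the trivial character det_{1_q} = 1_G in
   Ind_B^G(1_B) = rho_{1_q,1_q} *)
Definition rho_triv : 'CF(Gset) := rho2 1 1 - 1.

End GL2.

From HB Require Import structures.
From mathcomp Require Import all_boot all_order all_algebra all_fingroup all_solvable all_field all_character.
Import GroupScope GRing.Theory Num.Theory.
Local Open Scope ring_scope.

(* The upper-left entry is a morphism from B onto F^x with kernel P, so
   Ind_P^B 1 is the regular character of the abelian group F^x pulled back
   to B, i.e. the sum of the mu_{chi,1} over all characters chi of F^x.
   Inducing in stages through B and splitting off chi = 1, for which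
   Ind_B^G mu_{1,1} = 1 + rho_{1_q}, gives the decomposition. *)

Lemma cfInd_cfun1_ker (gT aT : finGroupType) (G : {group gT})
    (f : {morphism G >-> aT}) g :
  g \in G -> 'Ind[G, 'ker f] 1 g = #|f @* G|%:R *+ (f g == 1%g).
Proof.
move=> Gg; rewrite cfInd_cfun1 ?ker_normal // cfunE cfuniE ?ker_normal //.
by rewrite card_morphim setIid mulr_natr (sameP (kerP f Gg) eqP).
Qed.

Lemma sum_irr_abelian (aT : finGroupType) (A : {group aT}) x :
  abelian A -> \sum_(i : Iirr A) 'chi_i x = #|A|%:R *+ (x == 1%g).
Proof.
move=> abA; rewrite -cfRegE cfReg_sum sum_cfunE; apply: eq_bigr => i _.
by have /char_abelianP/(_ i)/lin_char1 -> := abA; rewrite cfunE mul1r.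
Qed.

Section Borel.
Variable F : finFieldType.
Local Notation gT := {'GL_2[F]}.

Lemma Fx_abelian : abelian (Fx F).
Proof. exact/cyclic_abelian/field_unit_group_cyclic. Qed.

Lemma toUnitK (a : F) : a != 0 -> val (toUnit a) = a.
Proof. by move=> a0; rewrite /toUnit insubdK // unitfE. Qed.

Definition topleft (g : gT) : {unit F} := toUnit (GLval g 0 0).

Lemma topleft_morph : {in Bset F &, {morph topleft : x y / (x * y)%g}}.
Proof.
move=> x y Bx By; have [x0 _] := Bdiag_nz Bx; have [y0 _] := Bdiag_nz By.
have y10 : GLval y 1 0 = 0 by move: By; rewrite inE => /eqP.
apply: val_inj; rewrite /topleft /= -mulmxE mul_tri_00 //.
by rewrite !toUnitK ?mulf_neq0.
Qed.

Canonical topleft_morphism := Morphism topleft_morph.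

Lemma ker_topleft : 'ker topleft = Pset F.
Proof.
apply/setP=> g; rewrite !inE /=; apply: andb_id2l => /eqP g10.
have /Bdiag_nz[g0 _] : g \in Bset F by rewrite inE g10.
by rewrite -val_eqE /= toUnitK.
Qed.

Lemma im_topleft : topleft @* Bset F = [set: {unit F}].
Proof.
apply/setP=> u; rewrite inE; apply/morphimP.
pose M := diag_mx (\row_(i < 2) if i == 0 then val u else 1 : F).
have unitM : M \is a GRing.unit.
  by rewrite unitmxE det_diag big_ord_recl big_ord1 !mxE mulr1; apply: valP.
have M00 : M 0 0 = val u by rewrite !mxE.
exists (FinRing.Unit unitM); rewrite ?inE /= ?mxE //.
by apply: val_inj; rewrite /topleft /= M00 toUnitK // -unitfE; apply: valP.
Qed.

Lemma mu12_1E (chi : 'CF(Fx F)) g :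
  g \in Bset F -> mu12 chi 1 g = chi (topleft g).
Proof. by move=> Bg; rewrite cfunElock /mu12_fun Bg cfun1E inE mulr1. Qed.

Lemma cfInd_BP_cfun1 :
  'Ind[Bset F, Pset F] 1 = \sum_(i : Iirr (Fx F)) mu12 'chi_i 1.
Proof.
apply/cfun_inP => g Bg; rewrite sum_cfunE.
under eq_bigr do rewrite mu12_1E //.
rewrite sum_irr_abelian ?Fx_abelian // -ker_topleft.
by rewrite cfInd_cfun1_ker // im_topleft.
Qed.

End Borel.

Theorem proposition5p1 (F : finFieldType) (hq : (2 < #|F|)%N) :
  'Ind[Gset F, Pset F] (1 : 'CF(Pset F)) =
    1 + rho_triv F +
    \sum_(i : Iirr (Fx F) | ('chi_i \is a linear_char) && ('chi_i != 1))
       rho2 'chi_i (1 : 'CF(Fx F)).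
Proof.
have sPB : Pset F \subset Bset F by rewrite -ker_topleft subsetIl.
rewrite -(cfIndInd _ (subsetT (Bset F)) sPB) cfInd_BP_cfun1 linear_sum /=.
rewrite (bigD1 0) //= /rho_triv irr0 [1 + _]addrC subrK.
congr (_ + _); apply: eq_bigl => i.
by have /char_abelianP-> := Fx_abelian F; rewrite irr_eq1.
Qed.
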